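(* Let $G$ be a graph with at most $n$ nodes, let $v$ be any node of $G$ and let $T$ be any trail. Then it can be verified, using only $\mathcal{V}^{2n-1}(v)$, whether $T$ is feasible from $v$ in $G$.
   Context: $G$ is a finite connected undirected graph with unlabeled nodes, where at each node of degree $d$ the incident edges have distinct port numbers $0,\dots,d-1$. Truncated views: $\mathcal{V}^0(v)$ is a single node; $\mathcal{V}^{l+1}(v)$ is the port-labeled rooted tree whose root has, for each neighbor $v_i$ of $v$, a child joined by an edge carrying the port number of $\{v,v_i\}$ at $v$ (root side) and at $v_i$ (child side), this child being the root of a copy of $\mathcal{V}^l(v_i)$. A trail is any finite sequence of non-negative integers. For a walk (not necessarily simple path) $R=(\{v_1,v_2\},\dots,\{v_{j-1},v_j\})$ in $G$, its trail is $(p_1,\dots,p_{2j-2})$ where $p_{2i-1}$ and $p_{2i}$ are the port numbers of $\{v_i,v_{i+1}\}$ at $v_i$ and at $v_{i+1}$. A trail $T$ is feasible from $v$ if there exists such a walk $R$ starting at $v_1=v$ whose trail equals $T$. *)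

From mathcomp Require Import all_boot.
Set Implicit Arguments. Unset Strict Implicit. Unset Printing Implicit Defensive.

Record port_graph (V : finType) := PortGraph {
  adj : rel V;
  adj_sym : symmetric adj;
  adj_irrefl : irreflexive adj;
  adj_connected : forall u w : V, connect adj u w;
  port : V -> V -> nat;                      (* port v u = port of {v,u} at v *)
  port_inj : forall v u w, adj v u -> adj v w -> port v u = port v w -> u = w;
  port_range : forall v u, adj v u -> port v u < #|[pred w | adj v w]|
}.

Section Views.
Variables (V : finType) (G : port_graph V).

Definition deg (v : V) : nat := #|[pred w | adj G v w]|.

Definition nbrs (v : V) : seq V :=
  sort (fun a b => port G v a <= port G v b) (enum [pred w | adj G v w]).
End Views.

(* The children of a node are listed in the order
   of the port number on the parent side of the connecting edge; since those
   ports are exactly 0,...,d-1 (distinct), the i-th child is joined by the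
   edge whose parent-side port is i; each child entry stores the port number
   on the child side together with the subtree rooted at the child. *)
Inductive vtree : Type := VNode of seq (nat * vtree).

Fixpoint view (V : finType) (G : port_graph V) (l : nat) (v : V) : vtree :=
  match l with
  | 0 => VNode [::]
  | l'.+1 => VNode [seq (port G u v, view G l' u) | u <- nbrs G v]
  end.

Definition trail := seq nat.

Fixpoint trail_of (V : finType) (G : port_graph V) (x : V) (s : seq V) : trail :=
  match s with
  | [::] => [::]
  | y :: s' => port G x y :: port G y x :: trail_of G y s'
  end.

Definition feasible (V : finType) (G : port_graph V) (T : trail) (v : V) : Prop :=
  exists s : seq V, path (adj G) v s /\ trail_of G v s = T.

(* Call two nodes (possibly of different graphs) equivalent at depth l if their
   views of depth l coincide.  Refining l refines this equivalence, and once two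
   consecutive depths induce the same partition, all deeper ones do too.  On
   the disjoint union of two graphs with at most n nodes each there are at most
   2n classes, so the partition stabilises by depth 2n - 1: equal views of
   depth 2n - 1 are equal at every depth.  Equal infinite views carry the same
   walks, port by port, hence the same feasible trails; so feasibility from v
   is the (classically defined) function "T is feasible from some node of some
   graph with at most n nodes having this view". *)

From HB Require Import structures.
From mathcomp Require Import all_boot zify.
From mathcomp Require Import boolp.
Set Implicit Arguments. Unset Strict Implicit. Unset Printing Implicit Defensive.

(* Classical decidable equality, needed only to count classes of equal views. *)
HB.instance Definition _ := gen_eqMixin vtree.

Section Classes.
Variables (T : finType) (r s : rel T).

Definition classes (e : rel T) : {set {set T}} := [set [set b | e a b] | a : T].

Lemma card_classes_le (e : rel T) : #|classes e| <= #|T|.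
Proof. exact: leq_trans (leq_imset_card _ _) (max_card _). Qed.

Hypotheses (r_equiv : equivalence_rel r) (s_equiv : equivalence_rel s).
Hypothesis sr : subrel s r.

Let r_ltrans : left_transitive r := (proj1 (equivalence_relP r) r_equiv).2.
Let s_refl : reflexive s := (proj1 (equivalence_relP s) s_equiv).1.

Let merge (C : {set T}) : {set T} := \bigcup_(x in C) [set b | r x b].

Let merge_class a : merge [set b | s a b] = [set b | r a b].
Proof.
apply/setP => b; rewrite inE; apply/bigcupP/idP.
- by case=> x; rewrite !inE => /sr rax; rewrite (r_ltrans rax).
- by exists a; rewrite inE ?s_refl.
Qed.

Let classes_merge : classes r = merge @: classes s.
Proof. by rewrite -imset_comp; apply: eq_imset => a /=; rewrite merge_class. Qed.

Lemma card_classes_subrel : #|classes r| <= #|classes s|.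
Proof. by rewrite classes_merge leq_imset_card. Qed.

Lemma card_classes_subrelE : #|classes r| = #|classes s| -> subrel r s.
Proof.
rewrite classes_merge => /eqP/imset_injP merge_inj a b rab.
have class_ab : [set c | s a c] = [set c | s b c].
  apply: merge_inj; rewrite ?imset_f // !merge_class.
  by apply/setP => c; rewrite !inE (r_ltrans rab).
by have := s_refl b; rewrite -[s b b]inE -class_ab inE.
Qed.
End Classes.

Section RefiningChain.
Variables (T : finType) (R : nat -> rel T).
Hypothesis R_equiv : forall l, equivalence_rel (R l).
Hypothesis R_refine : forall l, subrel (R l.+1) (R l).
Hypothesis R_stable : forall l, subrel (R l) (R l.+1) -> subrel (R l.+1) (R l.+2).

Lemma subrel_refine l m : l <= m -> subrel (R m) (R l).
Proof.
move/subnK <-; elim: (m - l) => [|k IHk] //= a b.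
by rewrite addSn => /R_refine /IHk.
Qed.

Lemma stable_from k m : subrel (R k) (R k.+1) -> k <= m -> subrel (R m) (R m.+1).
Proof.
by move=> stable_k /subnK <-; elim: (m - k) => //= i IHi; rewrite addSn; apply: R_stable.
Qed.

Lemma subrel_stable k m : subrel (R k) (R k.+1) -> k <= m -> subrel (R k) (R m).
Proof.
move=> stable_k; elim: m => [|m IHm]; first by rewrite leqn0 => /eqP ->.
rewrite leq_eqVlt => /predU1P [-> // | km] a b /IHm-/(_ km).
exact: stable_from stable_k km a b.
Qed.

Lemma exists_stable_level : 0 < #|T| -> exists2 k, k < #|T| & subrel (R k) (R k.+1).
Proof.
move=> T_gt0; apply: contrapT => no_stable.
have grow k : k <= #|T| -> k < #|classes (R k)|.
  elim: k => [_ | k IHk kT].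
    have [t0 _] := card_gt0P T_gt0.
    by apply/card_gt0P; exists [set b | R 0 t0 b]; apply: imset_f.
  apply: leq_ltn_trans (IHk (ltnW kT)) _; rewrite ltn_neqAle.
  rewrite (card_classes_subrel (R_equiv _) (R_equiv _) (@R_refine k)) andbT.
  apply/eqP => /(card_classes_subrelE (R_equiv _) (R_equiv _) (@R_refine k)).
  by move=> stable_k; apply: no_stable; exists k.
by have := grow _ (leqnn _); rewrite ltnNge card_classes_le.
Qed.

Lemma subrel_card_pred l : subrel (R #|T|.-1) (R l).
Proof.
case: (posnP #|T|) => [T0 a | T_gt0]; first by have := card0_eq T0 a; rewrite !inE.
have [k kT stable_k] := exists_stable_level T_gt0.
have [lT | Tl] := leqP l #|T|.-1; first exact: subrel_refine.
have kT' : k <= #|T|.-1 by rewrite -ltnS prednK.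
by move=> a b /(subrel_refine kT') /(subrel_stable stable_k (leq_trans kT' (ltnW Tl))).
Qed.
End RefiningChain.

Lemma map_eq_transfer (A B C : Type) (f : A -> B) (g : A -> C) (s t : seq A) :
  (forall x y, f x = f y -> g x = g y) -> map f s = map f t -> map g s = map g t.
Proof.
by move=> fg; elim: s t => [|x s IHs] [|y t] //= [/fg-> /IHs->].
Qed.

Section Unfolding.
Variables (T : Type) (ch : T -> seq (nat * T)).

Fixpoint unfold (l : nat) (a : T) : vtree :=
  if l is l'.+1 then VNode [seq (p.1, unfold l' p.2) | p <- ch a] else VNode [::].

Lemma unfoldS l a : unfold l.+1 a = VNode [seq (p.1, unfold l p.2) | p <- ch a].
Proof. by []. Qed.

Lemma unfold_refine l a b : unfold l.+1 a = unfold l.+1 b -> unfold l a = unfold l b.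
Proof.
elim: l a b => [//|l IHl] a b; rewrite !unfoldS => -[eq_ch]; congr VNode; move: eq_ch.
by apply: map_eq_transfer => -[p x] [q y] /pair_equal_spec[-> /IHl->].
Qed.

Lemma unfold_stable l :
    (forall a b, unfold l a = unfold l b -> unfold l.+1 a = unfold l.+1 b) ->
  forall a b, unfold l.+1 a = unfold l.+1 b -> unfold l.+2 a = unfold l.+2 b.
Proof.
move=> stable_l a b; rewrite !unfoldS => -[eq_ch]; congr VNode; move: eq_ch.
by apply: map_eq_transfer => -[p x] [q y] /pair_equal_spec[-> /stable_l->].
Qed.
End Unfolding.

Section SumUnfolding.
Variables (A B : Type) (chA : A -> seq (nat * A)) (chB : B -> seq (nat * B)).

Definition sum_children (c : A + B) : seq (nat * (A + B)) :=
  match c with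
  | inl x => [seq (p.1, inl p.2) | p <- chA x]
  | inr y => [seq (p.1, inr p.2) | p <- chB y]
  end.

Lemma unfold_inl l x : unfold sum_children l (inl x) = unfold chA l x.
Proof.
by elim: l x => //= l IHl x; rewrite -map_comp; congr VNode; apply: eq_map => -[p y] /=; rewrite IHl.
Qed.

Lemma unfold_inr l y : unfold sum_children l (inr y) = unfold chB l y.
Proof.
by elim: l y => //= l IHl y; rewrite -map_comp; congr VNode; apply: eq_map => -[p x] /=; rewrite IHl.
Qed.
End SumUnfolding.

Theorem unfold_eq_all (T : finType) (ch : T -> seq (nat * T)) m a b :
    #|T| <= m.+1 -> unfold ch m a = unfold ch m b ->
  forall l, unfold ch l a = unfold ch l b.
Proof.
pose R l : rel T := fun x y => unfold ch l x == unfold ch l y.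
have R_equiv l : equivalence_rel (R l) by move=> x y z; rewrite /R eqxx; split=> // /eqP->.
have R_refine l : subrel (R l.+1) (R l) by move=> x y /eqP eq_xy; apply/eqP/unfold_refine.
have R_stable l : subrel (R l) (R l.+1) -> subrel (R l.+1) (R l.+2).
  move=> stable_l x y /eqP eq_xy; apply/eqP; apply: unfold_stable eq_xy.
  by move=> {}x {}y /eqP eq_l; apply/eqP/stable_l.
move=> Tm /eqP Rm l; apply/eqP.
apply: (subrel_card_pred R_equiv R_refine R_stable).
by apply: (subrel_refine R_refine _ Rm); rewrite -subn1 leq_subLR add1n.
Qed.

Section PortGraph.
Variables (V : finType) (G : port_graph V).

Lemma mem_nbrs v u : (u \in nbrs G v) = adj G v u.
Proof. by rewrite mem_sort mem_enum. Qed.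

Lemma size_nbrs v : size (nbrs G v) = deg G v.
Proof. by rewrite size_sort /deg cardE. Qed.

Lemma nbrs_ports v : map (port G v) (nbrs G v) = iota 0 (deg G v).
Proof.
have uniq_ports : uniq (map (port G v) (nbrs G v)).
  rewrite map_inj_in_uniq ?sort_uniq ?enum_uniq // => a b.
  by rewrite !mem_nbrs; apply: port_inj.
have sorted_ports : sorted leq (map (port G v) (nbrs G v)).
  by rewrite sorted_map; apply: sort_sorted => a b; apply: leq_total.
apply: (irr_sorted_eq ltn_trans ltnn).
- by rewrite ltn_sorted_uniq_leq uniq_ports.
- by rewrite ltn_sorted_uniq_leq iota_uniq iota_sorted.
apply: (uniq_min_size uniq_ports _ _).2; last by rewrite size_map size_iota size_nbrs.
by move=> p /mapP[u]; rewrite mem_nbrs => /port_range u_lt ->; rewrite mem_iota.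
Qed.

Lemma port_nth v u0 i : i < deg G v -> port G v (nth u0 (nbrs G v) i) = i.
Proof.
move=> i_lt; have := congr1 (nth 0 ^~ i) (nbrs_ports v).
by rewrite (nth_map u0) ?size_nbrs // nth_iota.
Qed.

Definition children (v : V) : seq (nat * V) := [seq (port G u v, u) | u <- nbrs G v].

Lemma view_unfold l v : view G l v = unfold children l v.
Proof.
by elim: l v => //= l IHl v; rewrite -map_comp; congr VNode; apply: eq_map => u /=; rewrite IHl.
Qed.
End PortGraph.

Section TwoGraphs.
Variables (V W : finType) (G : port_graph V) (H : port_graph W).

Definition view_equiv (v : V) (w : W) : Prop := forall l, view G l v = view H l w.

Lemma view_equiv_step v w y : view_equiv v w -> adj G v y ->
  exists2 y', adj H w y' &
    [/\ port H w y' = port G v y, port H y' w = port G y v & view_equiv y y'].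
Proof.
move=> vw vy; have ys_eq l : [seq (port G u v, view G l u) | u <- nbrs G v] =
                            [seq (port H u w, view H l u) | u <- nbrs H w].
  by have [] := vw l.+1.
have deg_eq : deg G v = deg H w.
  by have := congr1 size (ys_eq 0); rewrite !size_map !size_nbrs.
have y_in : y \in nbrs G v by rewrite mem_nbrs.
set i := index y (nbrs G v).
have i_lt : i < deg G v by rewrite -size_nbrs index_mem.
have y_nth : nth y (nbrs G v) i = y by rewrite nth_index.
pose y' := nth w (nbrs H w) i.
have entries_eq l : (port G y v, view G l y) = (port H y' w, view H l y').
  have := congr1 (nth (0, VNode [::]) ^~ i) (ys_eq l).
  by rewrite (nth_map y) ?size_nbrs // (nth_map w) ?size_nbrs -?deg_eq // y_nth.
exists y'; first by rewrite -mem_nbrs mem_nth // size_nbrs -deg_eq.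
split; last by move=> l; have [] := entries_eq l.
- by rewrite -[in RHS]y_nth !port_nth -?deg_eq.
- by have [] := entries_eq 0.
Qed.

Lemma walk_transfer v w s : view_equiv v w -> path (adj G) v s ->
  exists2 s', path (adj H) w s' & trail_of H w s' = trail_of G v s.
Proof.
elim: s v w => [|y s IHs] v w vw /=; first by exists [::].
case/andP=> /(view_equiv_step vw)[y' wy' [port_wy' port_y'w yy']] /(IHs _ _ yy')[s' p' t'].
by exists (y' :: s'); rewrite /= ?wy' ?port_wy' ?port_y'w ?t'.
Qed.

Lemma feasible_transfer v w T : view_equiv v w -> feasible G T v -> feasible H T w.
Proof.
by move=> vw [s [/(walk_transfer vw)[s' p' t'] <-]]; exists s'.
Qed.

Lemma view_equiv_of_card n v w : #|V| <= n -> #|W| <= n ->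
  view G (2 * n - 1) v = view H (2 * n - 1) w -> view_equiv v w.
Proof.
move=> Vn Wn eq_v l.
have := @unfold_eq_all _ (sum_children (children G) (children H)) (2 * n - 1) (inl v) (inr w).
rewrite !unfold_inl !unfold_inr -!view_unfold => /(_ _ eq_v l).
rewrite unfold_inl unfold_inr -!view_unfold; apply.
have n_gt0 : 0 < n by apply: leq_trans Vn; apply/card_gt0P; exists v.
rewrite card_sum; lia.
Qed.
End TwoGraphs.

Theorem corollary5p3 (n : nat) :
  exists f : vtree -> trail -> bool,
    forall (V : finType) (G : port_graph V), #|V| <= n ->
    forall (v : V) (T : trail),
      feasible G T v <-> f (view G (2 * n - 1) v) T.
Proof.
exists (fun t T => `[< exists (W : finType) (H : port_graph W) (w : W),
                       [/\ #|W| <= n, view H (2 * n - 1) w = t & feasible H T w] >]).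
move=> V G Vn v T; split => [feas_v | /asboolP[W [H [w [Wn eq_w feas_w]]]]].
- by apply/asboolP; exists V, G, v.
- exact: feasible_transfer (view_equiv_of_card Wn Vn eq_w) feas_w.
Qed.
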